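(* Let $\Psi=\begin{bmatrix}\Psi_{11}&\Psi_{12}\\ \Psi_{12}^\top&\Psi_{22}\end{bmatrix}\in\mathbb{R}^{(p+q)\times(p+q)}$ be symmetric with $\Psi_{11}\in\mathbb{R}^{p\times p}$, $\Psi_{22}<0$ and $\Psi|\Psi_{22}:=\Psi_{11}-\Psi_{12}\Psi_{22}^{-1}\Psi_{12}^\top>0$, and let $\mathcal M:=\{Z\in\mathbb{R}^{p\times q}:\begin{bmatrix}I\\Z^\top\end{bmatrix}^\top\Psi\begin{bmatrix}I\\Z^\top\end{bmatrix}\ge0\}$. Let $V\in\mathbb{R}^{q\times\hat q}$ and $W\in\mathbb{R}^{p\times\hat p}$ have full column rank, with $\hat p\le p$, $\hat q\le q$, and define $\mathcal M_{V,W}:=\{W^\top ZV:Z\in\mathcal M\}$ and $$\Psi_{V,W}:=\begin{bmatrix} W^\top\big(\Psi|\Psi_{22}+\Psi_{12}\Psi_{22}^{-1}V(V^\top\Psi_{22}^{-1}V)^{-1}V^\top\Psi_{22}^{-1}\Psi_{12}^\top\big)W & W^\top\Psi_{12}\Psi_{22}^{-1}V(V^\top\Psi_{22}^{-1}V)^{-1}\\ (V^\top\Psi_{22}^{-1}V)^{-1}V^\top\Psi_{22}^{-1}\Psi_{12}^\top W&(V^\top\Psi_{22}^{-1}V)^{-1}\end{bmatrix}.$$ Then $$\mathcal M_{V,W}=\Big\{\hat Z\in\mathbb{R}^{\hat p\times\hat q}:\begin{bmatrix}I\\ \hat Z^\top\end{bmatrix}^\top\Psi_{V,W}\begin{bmatrix}I\\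 \hat Z^\top\end{bmatrix}\ge0\Big\}.$$ *)

From HB Require Import structures.
From mathcomp Require Import all_boot all_order all_algebra.
From mathcomp Require Import reals.
Set Implicit Arguments. Unset Strict Implicit. Unset Printing Implicit Defensive.
Import Order.TTheory GRing.Theory Num.Theory.
Local Open Scope ring_scope.

Definition psd {R : realType} {n : nat} (A : 'M[R]_n) : Prop :=
  forall x : 'cV[R]_n, 0 <= (x^T *m A *m x) 0 0.
Definition pd {R : realType} {n : nat} (A : 'M[R]_n) : Prop :=
  forall x : 'cV[R]_n, x != 0 -> 0 < (x^T *m A *m x) 0 0.
Definition nd {R : realType} {n : nat} (A : 'M[R]_n) : Prop :=
  forall x : 'cV[R]_n, x != 0 -> (x^T *m A *m x) 0 0 < 0.

Definition Psi11 {R : realType} {p q : nat} (Psi : 'M[R]_(p + q)) : 'M[R]_p := ulsubmx Psi.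
Definition Psi12 {R : realType} {p q : nat} (Psi : 'M[R]_(p + q)) : 'M[R]_(p, q) := ursubmx Psi.
Definition Psi22 {R : realType} {p q : nat} (Psi : 'M[R]_(p + q)) : 'M[R]_q := drsubmx Psi.

Definition schur22 {R : realType} {p q : nat} (Psi : 'M[R]_(p + q)) : 'M[R]_p :=
  Psi11 Psi - Psi12 Psi *m invmx (Psi22 Psi) *m (Psi12 Psi)^T.

Definition qmat {R : realType} {p q : nat} (Psi : 'M[R]_(p + q)) (Z : 'M[R]_(p, q)) : 'M[R]_p :=
  (col_mx 1%:M Z^T)^T *m Psi *m col_mx 1%:M Z^T.

Definition inM {R : realType} {p q : nat} (Psi : 'M[R]_(p + q)) (Z : 'M[R]_(p, q)) : Prop :=
  psd (qmat Psi Z).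

Definition inMVW {R : realType} {p q ph qh : nat} (Psi : 'M[R]_(p + q))
  (V : 'M[R]_(q, qh)) (W : 'M[R]_(p, ph)) (Zh : 'M[R]_(ph, qh)) : Prop :=
  exists Z : 'M[R]_(p, q), inM Psi Z /\ Zh = W^T *m Z *m V.

Definition PsiVW {R : realType} {p q ph qh : nat} (Psi : 'M[R]_(p + q))
  (V : 'M[R]_(q, qh)) (W : 'M[R]_(p, ph)) : 'M[R]_(ph + qh) :=
  let iP22 := invmx (Psi22 Psi) in
  let G := invmx (V^T *m iP22 *m V) in
  block_mx
    (W^T *m (schur22 Psi + Psi12 Psi *m iP22 *m V *m G *m V^T *m iP22 *m (Psi12 Psi)^T) *m W)
    (W^T *m Psi12 Psi *m iP22 *m V *m G)
    (G *m V^T *m iP22 *m (Psi12 Psi)^T *m W)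
    G.

From HB Require Import structures.
From mathcomp Require Import all_boot all_order all_algebra.
From mathcomp Require Import reals.
Import Order.TTheory GRing.Theory Num.Theory.
Local Open Scope ring_scope.

(* Completing the square in Z turns the constraint defining M into
   S + E Psi22 E^T >= 0 with S := Psi|Psi22 > 0 and E := Z + Psi12 Psi22^-1,
   and the constraint defined by Psi_{V,W} into
   W^T S W + Y G Y^T >= 0 with G := (V^T Psi22^-1 V)^-1 and
   Y := Zh + W^T Psi12 Psi22^-1 V, where Y = W^T E V when Zh = W^T Z V.
   The inclusion M_{V,W} <= ... follows from V G V^T - Psi22 >= 0, a Schur
   complement bound.  Conversely, given Y one lifts it to
   E := S W (W^T S W)^-1 Y G V^T Psi22^-1, for which W^T E V = Y and
   S + E Psi22 E^T = (S - S W (W^T S W)^-1 W^T S) + F (W^T S W + Y G Y^T) F^T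
   with F := S W (W^T S W)^-1, a sum of two positive semidefinite matrices. *)

Set Implicit Arguments.
Unset Strict Implicit.

Section Definiteness.
Variable R : realType.

Lemma psd_cong m n (A : 'M[R]_n) (F : 'M[R]_(m, n)) : psd A -> psd (F *m A *m F^T).
Proof. by move=> psdA x; have := psdA (F^T *m x); rewrite trmx_mul trmxK !mulmxA. Qed.

Lemma psdD n (A B : 'M[R]_n) : psd A -> psd B -> psd (A + B).
Proof. by move=> psdA psdB x; rewrite mulmxDr mulmxDl mxE addr_ge0. Qed.

Lemma pd_psd n (A : 'M[R]_n) : pd A -> psd A.
Proof.
move=> pdA x; have [->|x_neq0] := eqVneq x 0; first by rewrite mulmx0 mxE.
exact/ltW/pdA.
Qed.

Lemma nd_psdN n (A : 'M[R]_n) : nd A -> psd (- A).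
Proof.
move=> ndA x; have [->|x_neq0] := eqVneq x 0; first by rewrite mulmx0 mxE.
by rewrite mulmxN mulNmx mxE oppr_ge0; exact/ltW/ndA.
Qed.

Lemma unitmx_anisotropic n (A : 'M[R]_n) :
  (forall x : 'cV[R]_n, x != 0 -> (x^T *m A *m x) 0 0 != 0) -> A \in unitmx.
Proof.
move=> anisoA; rewrite unitmxE unitfE; apply/negP => /det0P [v v_neq0 vA].
by have := anisoA v^T; rewrite trmx_eq0 trmxK vA mul0mx mxE eqxx => /(_ v_neq0).
Qed.

Lemma nd_unitmx n (A : 'M[R]_n) : nd A -> A \in unitmx.
Proof. by move=> ndA; apply: unitmx_anisotropic => x /ndA /lt_eqF ->. Qed.

Lemma pd_unitmx n (A : 'M[R]_n) : pd A -> A \in unitmx.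
Proof. by move=> pdA; apply: unitmx_anisotropic => x /pdA /gt_eqF ->. Qed.

Lemma nd_invmx n (A : 'M[R]_n) : A^T = A -> nd A -> nd (invmx A).
Proof.
move=> AT ndA x x_neq0; have uA := nd_unitmx ndA.
have -> : x^T *m invmx A *m x = (invmx A *m x)^T *m A *m (invmx A *m x).
  by rewrite trmx_mul trmx_inv AT !mulmxA mulmxKV.
by apply: ndA; apply: contraNneq x_neq0 => Ax0; rewrite -(mulKVmx uA x) Ax0 mulmx0.
Qed.

Lemma full_col_rank_mul_eq0 m n (V : 'M[R]_(m, n)) (y : 'cV[R]_n) :
  \rank V = n -> (V *m y == 0) = (y == 0).
Proof.
move=> rV; have freeVT : row_free V^T by rewrite /row_free mxrank_tr rV.
by rewrite -trmx_eq0 trmx_mul mulmx_free_eq0 // trmx_eq0.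
Qed.

Lemma nd_cong m n (A : 'M[R]_m) (V : 'M[R]_(m, n)) :
  \rank V = n -> nd A -> nd (V^T *m A *m V).
Proof.
move=> rV ndA y y_neq0; rewrite -(full_col_rank_mul_eq0 _ rV) in y_neq0.
by have := ndA _ y_neq0; rewrite trmx_mul !mulmxA.
Qed.

Lemma pd_cong m n (A : 'M[R]_m) (V : 'M[R]_(m, n)) :
  \rank V = n -> pd A -> pd (V^T *m A *m V).
Proof.
move=> rV pdA y y_neq0; rewrite -(full_col_rank_mul_eq0 _ rV) in y_neq0.
by have := pdA _ y_neq0; rewrite trmx_mul !mulmxA.
Qed.

(* M - M B H B^T M = (1 - X)^T M (1 - X) with X := B H B^T M. *)
Lemma psd_sub_proj n k (M : 'M[R]_n) (B : 'M[R]_(n, k)) (H : 'M[R]_k) :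
  psd M -> M^T = M -> H^T = H -> H *m (B^T *m M *m B) *m H = H ->
  psd (M - M *m B *m H *m B^T *m M).
Proof.
move=> psdM MT HT H_ginv; set X := B *m H *m B^T *m M.
have XT : X^T = M *m B *m H *m B^T by rewrite /X !trmx_mul trmxK MT HT !mulmxA.
have <- : (1%:M - X)^T *m M *m (1%:M - X) = M - M *m B *m H *m B^T *m M.
  rewrite [(_ - X)^T]linearB /= trmx1 XT mulmxBr mulmx1 !mulmxBl !mul1mx /X !mulmxA.
  have -> : M *m B *m H *m B^T *m M *m B *m H *m B^T *m M = M *m B *m H *m B^T *m M.
    by rewrite -[in RHS]H_ginv !mulmxA.
  by rewrite subrr subr0.
by have := psd_cong (1%:M - X)^T psdM; rewrite trmxK.
Qed.

End Definiteness.

Section CompleteSquare.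
Variable R : realType.

Lemma qmat_block p q (A : 'M[R]_p) (B : 'M[R]_(p, q)) (C : 'M[R]_(q, p)) (D : 'M[R]_q) Z :
  qmat (block_mx A B C D) Z = A + Z *m C + (B + Z *m D) *m Z^T.
Proof.
by rewrite /qmat tr_col_mx trmx1 trmxK mul_row_block mul_row_col !mul1mx mulmx1.
Qed.

Lemma qmat_block_sym p q (A : 'M[R]_p) (B : 'M[R]_(p, q)) (D : 'M[R]_q) Z :
  D \in unitmx -> D^T = D ->
  qmat (block_mx A B B^T D) Z =
  (A - B *m invmx D *m B^T) + (Z + B *m invmx D) *m D *m (Z + B *m invmx D)^T.
Proof.
move=> uD DT; have iDT : (invmx D)^T = invmx D by rewrite trmx_inv DT.
rewrite qmat_block linearD /= trmx_mul iDT mulmxDl (mulmxDl Z) mulmxKV //.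
rewrite mulmxDr !mulmxDl !mulmxA mulmxK // (addrC (Z *m B^T)).
rewrite (addrCA (Z *m D *m Z^T + B *m Z^T)) -[RHS]addrA addKr -addrA.
by rewrite [X in _ + X = _]addrC (addrC (B *m Z^T)).
Qed.

End CompleteSquare.

Section Compression.
Variables (R : realType) (p q ph qh : nat).
Variables (S : 'M[R]_p) (N : 'M[R]_q) (V : 'M[R]_(q, qh)) (W : 'M[R]_(p, ph)).
Hypotheses (ST : S^T = S) (pdS : pd S) (NT : N^T = N) (ndN : nd N).
Hypotheses (rankV : \rank V = qh) (rankW : \rank W = ph).

Let iN := invmx N.
Let K := V^T *m iN *m V.
Let G := invmx K.
Let L := W^T *m S *m W.

Let uN : N \in unitmx. Proof. exact: nd_unitmx. Qed.
Let iNT : iN^T = iN. Proof. by rewrite trmx_inv NT. Qed.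
Let uK : K \in unitmx. Proof. exact/nd_unitmx/nd_cong/nd_invmx. Qed.
Let GT : G^T = G. Proof. by rewrite trmx_inv !trmx_mul trmxK iNT mulmxA. Qed.
Let uL : L \in unitmx. Proof. exact/pd_unitmx/pd_cong. Qed.
Let LT : L^T = L. Proof. by rewrite !trmx_mul trmxK ST mulmxA. Qed.

Let mulmxGK m (X : 'M[R]_(m, qh)) : X *m G *m V^T *m iN *m V = X.
Proof. by rewrite -!mulmxA (mulmxA V^T) mulVmx ?mulmx1. Qed.

Let mulmxLK m (X : 'M[R]_(m, ph)) : X *m invmx L *m W^T *m S *m W = X.
Proof. by rewrite -!mulmxA (mulmxA W^T) mulVmx ?mulmx1. Qed.

Lemma psd_compress_gap : psd (V *m G *m V^T - N).
Proof.
have -> : V *m G *m V^T - N = - N - - N *m (iN *m V) *m - G *m (iN *m V)^T *m - N.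
  rewrite trmx_mul iNT !mulNmx !mulmxN !opprK !mulmxA mulmxKV //.
  by rewrite mulNmx opprK -!mulmxA mulKVmx // !mulmxA addrC.
apply: psd_sub_proj; first exact: nd_psdN.
- by rewrite linearN /= NT.
- by rewrite linearN /= GT.
rewrite trmx_mul iNT !mulNmx !mulmxN !opprK !mulmxA mulmxKV //.
by rewrite mulmxN !mulNmx -[G in RHS]mul1mx -(mulmxGK 1%:M) mul1mx.
Qed.

Lemma psd_compress (E : 'M[R]_(p, q)) :
  psd (S + E *m N *m E^T) ->
  psd (L + (W^T *m E *m V) *m G *m (W^T *m E *m V)^T).
Proof.
move=> psdE.
have -> : L + W^T *m E *m V *m G *m (W^T *m E *m V)^T =
    W^T *m (S + E *m N *m E^T + E *m (V *m G *m V^T - N) *m E^T) *m W^T^T.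
  rewrite trmxK -addrA -mulmxDl -mulmxDr (addrC N) subrK mulmxDr mulmxDl.
  by congr (_ + _); rewrite !trmx_mul trmxK !mulmxA.
by apply/psd_cong/psdD => //; apply/psd_cong/psd_compress_gap.
Qed.

Lemma psd_compress_lift (Y : 'M[R]_(ph, qh)) :
  psd (L + Y *m G *m Y^T) ->
  exists2 E : 'M[R]_(p, q), psd (S + E *m N *m E^T) & Y = W^T *m E *m V.
Proof.
move=> psdY; set F := S *m W *m invmx L; exists (F *m Y *m G *m V^T *m iN).
  have psd_residual : psd (S - S *m W *m invmx L *m W^T *m S).
    apply: psd_sub_proj => //; first exact: pd_psd.
      by rewrite trmx_inv LT.
    by rewrite -/L mulVmx // mul1mx.
  have -> : S + F *m Y *m G *m V^T *m iN *m N *m (F *m Y *m G *m V^T *m iN)^T =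
      (S - S *m W *m invmx L *m W^T *m S) + F *m (L + Y *m G *m Y^T) *m F^T.
    rewrite mulmxDr mulmxDl addrA; congr (_ + _).
      by rewrite /F !trmx_mul trmx_inv LT ST !mulmxA mulmxLK subrK.
    by rewrite !trmx_mul iNT trmxK GT !mulmxA mulmxKV // mulmxGK.
  by apply: psdD => //; apply: psd_cong.
by rewrite /F !mulmxA -/L mulmxV // mul1mx mulmxGK.
Qed.

End Compression.

Section SymmetricPsi.
Variables (R : realType) (p q : nat) (Psi : 'M[R]_(p + q)).
Hypotheses (PsiT : Psi^T = Psi) (unit_Psi22 : Psi22 Psi \in unitmx).

Local Notation iP22 := (invmx (Psi22 Psi)).

Lemma Psi22_sym : (Psi22 Psi)^T = Psi22 Psi.
Proof. by rewrite /Psi22 trmx_drsub PsiT. Qed.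

Lemma invmx_Psi22_sym : iP22^T = iP22.
Proof. by rewrite trmx_inv Psi22_sym. Qed.

Lemma schur22_sym : (schur22 Psi)^T = schur22 Psi.
Proof.
have Psi11T : (Psi11 Psi)^T = Psi11 Psi by rewrite /Psi11 trmx_ulsub PsiT.
by rewrite /schur22 linearB /= Psi11T !trmx_mul trmxK invmx_Psi22_sym !mulmxA.
Qed.

Lemma qmat_schur22 (Z : 'M[R]_(p, q)) :
  qmat Psi Z =
  schur22 Psi + (Z + Psi12 Psi *m iP22) *m Psi22 Psi *m (Z + Psi12 Psi *m iP22)^T.
Proof.
have Psi21 : dlsubmx Psi = (Psi12 Psi)^T by rewrite /Psi12 trmx_ursub PsiT.
by rewrite -[in LHS](submxK Psi) Psi21 qmat_block_sym // Psi22_sym.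
Qed.

Lemma qmat_PsiVW ph qh (V : 'M[R]_(q, qh)) (W : 'M[R]_(p, ph)) (Zh : 'M[R]_(ph, qh)) :
  V^T *m iP22 *m V \in unitmx ->
  qmat (PsiVW Psi V W) Zh =
  W^T *m schur22 Psi *m W +
  (Zh + W^T *m Psi12 Psi *m iP22 *m V) *m invmx (V^T *m iP22 *m V) *m
  (Zh + W^T *m Psi12 Psi *m iP22 *m V)^T.
Proof.
move=> uK; set G := invmx (V^T *m iP22 *m V).
have GT : G^T = G by rewrite trmx_inv !trmx_mul trmxK invmx_Psi22_sym mulmxA.
rewrite /PsiVW /= -/G.
have -> : G *m V^T *m iP22 *m (Psi12 Psi)^T *m W =
    (W^T *m Psi12 Psi *m iP22 *m V *m G)^T.
  by rewrite !trmx_mul trmxK GT invmx_Psi22_sym !mulmxA.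
rewrite qmat_block_sym ?unitmx_inv // invmxK mulmxKV //.
congr (_ + _); rewrite !trmx_mul trmxK GT invmx_Psi22_sym.
by rewrite mulmxDr mulmxDl !mulmxA addrK.
Qed.

End SymmetricPsi.

Theorem theoremA1 (R : realType) (p q ph qh : nat) (Psi : 'M[R]_(p + q))
  (V : 'M[R]_(q, qh)) (W : 'M[R]_(p, ph))
  (Hsym : Psi^T = Psi)
  (H22 : nd (Psi22 Psi))
  (Hschur : pd (schur22 Psi))
  (HV : \rank V = qh) (HW : \rank W = ph)
  (Hph : (ph <= p)%N) (Hqh : (qh <= q)%N) :
  forall Zh : 'M[R]_(ph, qh),
    inMVW Psi V W Zh <-> psd (qmat (PsiVW Psi V W) Zh).
Proof.
move=> Zh; have [ST P22T] := (schur22_sym Hsym, Psi22_sym Hsym).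
have uP22 := nd_unitmx H22.
have uK : V^T *m invmx (Psi22 Psi) *m V \in unitmx.
  exact/nd_unitmx/nd_cong/nd_invmx.
set C := Psi12 Psi *m invmx (Psi22 Psi).
have shift_compress (Z : 'M[R]_(p, q)) :
    W^T *m Z *m V + W^T *m Psi12 Psi *m invmx (Psi22 Psi) *m V = W^T *m (Z + C) *m V.
  by rewrite mulmxDr mulmxDl !mulmxA.
rewrite qmat_PsiVW //; split.
  case=> Z [psdZ ->]; rewrite shift_compress.
  by apply: psd_compress; rewrite // -qmat_schur22.
case/psd_compress_lift => // E psdE Y_eq; exists (E - C); split.
  by rewrite /inM qmat_schur22 // subrK.
by rewrite mulmxBr mulmxBl -Y_eq !mulmxA addrK.
Qed.
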